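(* Let $A$ be a graded Frobenius algebra of Gorenstein parameter $-\ell$. Then for every $i\in\mathbb{N}$, $D(A_{\ge i}(i))\cong A(\ell-i)/A(\ell-i)_{\ge1}$ as graded right $A$-modules.
   Context: Graded algebras are $\mathbb{N}$-graded algebras over an algebraically closed field $k$. $M(n)_m=M_{n+m}$, $M_{\ge n}=\bigoplus_{m\ge n}M_m$, $D(M)=\bigoplus_m\mathrm{Hom}_k(M_{-m},k)$ (the dual of a graded left module is a graded right module). $A_{\ge i}$ is regarded as a graded left $A$-module. $A$ is graded Frobenius of Gorenstein parameter $-\ell$ if it is locally finite and $D(A)\cong A(\ell)$ as graded right $A$-modules. *)

From HB Require Import structures.
From mathcomp Require Import all_boot all_algebra.
Set Implicit Arguments. Unset Strict Implicit. Unset Printing Implicit Defensive.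
Import GRing.Theory.
Local Open Scope ring_scope.

Definition dcast {I : Type} (V : I -> Type) {i j : I} (e : i = j) (x : V i) : V j :=
  eq_rect i V x j e.
Arguments dcast {I} V {i j} e x.

Section Graded.
Variable k : fieldType.

Record galg := GAlg {
  acomp : nat -> vectType k;
  amul : forall n m, acomp n -> acomp m -> acomp (n + m)%N;
  aone : acomp 0%N }.

Definition is_graded_algebra (A : galg) : Prop :=
  [/\ (forall n m (y : acomp A m), linear (fun x : acomp A n => amul x y)),
      (forall n m (x : acomp A n), linear (fun y : acomp A m => amul x y)),
      (forall n m p (x : acomp A n) (y : acomp A m) (z : acomp A p),
         dcast (acomp A) (addnA n m p) (amul x (amul y z)) = amul (amul x y) z),
      (forall n (x : acomp A n), amul (aone A) x = x)
    & (forall n (x : acomp A n), dcast (acomp A) (addn0 n) (amul x (aone A)) = x)].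

Variable A : galg.

Record grmod := GRMod {
  rcomp : int -> vectType k;
  ract : forall (m : int) (n : nat), rcomp m -> acomp A n -> rcomp (m + Posz n) }.
Record glmod := GLMod {
  lcomp : int -> vectType k;
  lact : forall (n : nat) (m : int), acomp A n -> lcomp m -> lcomp (Posz n + m) }.

Definition grIso (M N : grmod) : Prop :=
  exists f : forall m, rcomp M m -> rcomp N m,
    [/\ forall m, linear (f m),
        forall m, bijective (f m)
      & forall m n (x : rcomp M m) (a : acomp A n),
          f (m + Posz n) (ract x a) = ract (f m x) a].

(* A viewed as Z-graded: zero in negative degrees *)
Definition gzcomp (m : int) : vectType k :=
  match m with Posz n => acomp A n | Negz _ => 'rV[k]_0 end.

Definition grreg : grmod := @GRMod gzcomp
  (fun m n => match m as m0 return gzcomp m0 -> acomp A n -> gzcomp (m0 + Posz n) with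
   | Posz m' => fun x a => dcast gzcomp (PoszD m' n) (amul x a)
   | Negz _ => fun _ _ => 0 end).

Definition glreg : glmod := @GLMod gzcomp
  (fun n m => match m as m0 return acomp A n -> gzcomp m0 -> gzcomp (Posz n + m0) with
   | Posz m' => fun a x => dcast gzcomp (PoszD n m') (amul a x)
   | Negz _ => fun _ _ => 0 end).

Definition grshift (M : grmod) (s : int) : grmod :=
  @GRMod (fun m => rcomp M (s + m))
    (fun m n x a => dcast (rcomp M) (esym (addrA s m (Posz n))) (ract x a)).
Definition glshift (N : glmod) (s : int) : glmod :=
  @GLMod (fun m => lcomp N (s + m))
    (fun n m a x => dcast (lcomp N) (addrCA (Posz n) s m) (lact a x)).

Definition grsub (M : grmod) (S : forall m, {vspace rcomp M m}) : grmod :=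
  @GRMod (fun m => subvs_of (S m))
    (fun m n x a => vsproj (S (m + Posz n)) (ract (vsval x) a)).
Definition glsub (N : glmod) (S : forall m, {vspace lcomp N m}) : glmod :=
  @GLMod (fun m => subvs_of (S m))
    (fun n m a x => vsproj (S (Posz n + m)) (lact a (vsval x))).

Definition glge (N : glmod) (i : int) : glmod :=
  @glsub N (fun m => if i <= m then fullv else 0%VS).

(* M / M_{>= i} : realised on the complementary graded subspace M_{< i},
   with the induced action (projection killing degrees >= i) *)
Definition grquot_ge (M : grmod) (i : int) : grmod :=
  @grsub M (fun m => if m < i then fullv else 0%VS).

Lemma dual_deg (n : nat) (m : int) : Posz n + - (m + Posz n) = - m.
Proof. by rewrite opprD addrCA addrN addr0. Qed.

Definition gdual (N : glmod) : grmod :=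
  @GRMod (fun m => 'Hom(lcomp N (- m), k^o))
    (fun m n f a => linfun (fun x : lcomp N (- (m + Posz n)) =>
        f (dcast (lcomp N) (dual_deg n m) (lact a x)))).

End Graded.

(* A graded Frobenius of Gorenstein parameter -l : locally finite (built
   into galg) and D(A) ~= A(l) as graded right A-modules *)
Definition graded_frobenius (k : fieldType) (A : galg k) (l : int) : Prop :=
  is_graded_algebra A /\ grIso (gdual (glreg A)) (grshift (grreg A) l).

(* In degree [m], D(A_{>=i}(i)) is the dual of (A_{>=i})_{i-m}, which is all of
   A_{i-m} when [m <= 0] and zero otherwise.  The Frobenius isomorphism
   D(A) ~= A(l) identifies the dual of A_{i-m} with A_{l-i+m} = A(l-i)_m, and the
   quotient A(l-i)/A(l-i)_{>=1} is likewise A(l-i)_m for [m <= 0] and zero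
   otherwise.  If [a] in A_n acts from degree [m] to a degree [m + n <= 0], then
   also [m <= 0], so no truncation intervenes and compatibility with the action is
   that of the Frobenius isomorphism; for [m + n >= 1] the target is zero. *)
From HB Require Import structures.
From mathcomp Require Import all_boot all_algebra zify.
Set Implicit Arguments. Unset Strict Implicit. Unset Printing Implicit Defensive.
Import GRing.Theory.
Local Open Scope ring_scope.

Section Transport.
Variable I : eqType.

Lemma dcast_dcast (V : I -> Type) p q r (e1 : p = q) (e2 : q = r) x :
  dcast V e2 (dcast V e1 x) = dcast V (etrans e1 e2) x.
Proof. by case: r / e2; case: q / e1. Qed.

Lemma dcast_irr (V : I -> Type) p q (e1 e2 : p = q) x :
  dcast V e1 x = dcast V e2 x.
Proof. by rewrite (eq_irrelevance e1 e2). Qed.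

Lemma dcast_id (V : I -> Type) p (e : p = p) x : dcast V e x = x.
Proof. by rewrite (eq_irrelevance e erefl). Qed.

Lemma dcast_comp (J : Type) (W : J -> Type) (g : I -> J) p q (e : p = q) x :
  dcast (fun r => W (g r)) e x = dcast W (congr1 g e) x.
Proof. by case: q / e. Qed.

Lemma dcast_nat (V W : I -> Type) (L : forall p, V p -> W p) p q (e : p = q) x :
  L q (dcast V e x) = dcast W e (L p x).
Proof. by case: q / e. Qed.

Lemma dcast_linear (k : fieldType) (V : I -> vectType k) p q (e : p = q) :
  linear (dcast V e).
Proof. by case: q / e. Qed.

Lemma dcast_bij (V : I -> Type) p q (e : p = q) : bijective (dcast V e).
Proof. by case: q / e; exists id. Qed.

Lemma dcast_vsval (k : fieldType) (V : I -> vectType k) (U : forall p, {vspace V p})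
    p q (e : p = q) (x : subvs_of (U p)) :
  vsval (dcast (fun r => subvs_of (U r)) e x) = dcast V e (vsval x).
Proof. by case: q / e. Qed.

Lemma dcast_hom (k : fieldType) (J : Type) (W : J -> vectType k) (K : vectType k)
    (g : I -> J) p q (e : p = q) (h : 'Hom(W (g p), K)) y :
  dcast (fun r => 'Hom(W (g r), K)) e h y = h (dcast W (congr1 g (esym e)) y).
Proof. by move: y; case: q / e. Qed.

End Transport.

Section Subspaces.
Variables (k : fieldType) (V : vectType k).

Lemma linfunE_linear (W : vectType k) (F : V -> W) : linear F -> linfun F =1 F.
Proof.
move=> F_lin; pose FL : {linear V -> W} := HB.pack F (GRing.isLinear.Build _ _ _ _ F F_lin).
exact: (lfunE FL).
Qed.

Lemma memv_if (c : bool) (v : V) : c -> v \in (if c then fullv else 0%VS).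
Proof. by move->; exact: memvf. Qed.

Lemma subvs_if_eq0 (c : bool) (x : subvs_of (if c then fullv else 0%VS : {vspace V})) :
  ~~ c -> x = 0.
Proof.
move/negbTE=> c_false; apply: val_inj; case: x => v /=.
by rewrite c_false memv0 => /eqP.
Qed.

Lemma vsproj_bij (U : {vspace V}) : (forall v, v \in U) -> bijective (vsproj U).
Proof. by move=> memU; exists vsval => [v|x]; rewrite ?vsprojK ?vsvalK. Qed.

Lemma lfun_dom0 (W : vectType k) (f : 'Hom(V, W)) : (forall x : V, x = 0) -> f = 0.
Proof. by move=> V0; apply/lfunP => x; rewrite (V0 x) !linear0. Qed.

End Subspaces.

Lemma bij_subsingleton (T U : Type) (f : T -> U) (t : T) :
  (forall x y : T, x = y) -> (forall x y : U, x = y) -> bijective f.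
Proof. by move=> eqT eqU; exists (fun=> t) => [x|y]; [exact: eqT | exact: eqU]. Qed.

Lemma lact_linear (k : fieldType) (A : galg k) : is_graded_algebra A ->
  forall n (a : acomp A n) (p : int), linear (@lact _ _ (glreg A) n p a).
Proof.
case=> _ mul_linear _ _ _ n a [p|p] c u v /=; last by rewrite scaler0 addr0.
by rewrite mul_linear dcast_linear.
Qed.

Section FrobeniusTruncation.
Variables (k : fieldType) (A : galg k) (l : int).
Hypothesis A_graded : is_graded_algebra A.
Variable phi : forall m, rcomp (gdual (glreg A)) m -> rcomp (grshift (grreg A) l) m.
Arguments phi : clear implicits.
Hypothesis phi_linear : forall m, linear (phi m).
Hypothesis phi_bij : forall m, bijective (phi m).
Hypothesis phi_ract : forall m n (x : rcomp (gdual (glreg A)) m) (a : acomp A n),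
  phi (m + Posz n) (ract x a) = ract (phi m x) a.
Variable i : nat.

Local Notation DAge := (gdual (glshift (glge (glreg A) (Posz i)) (Posz i))).
Local Notation Q := (grquot_ge (grshift (grreg A) (l - Posz i)) 1).
Local Notation Age p := (if Posz i <= p then fullv else 0%VS : {vspace gzcomp A p}) (p in scope ring_scope).

Lemma shift_deg m : l + (m - Posz i) = l - Posz i + m.
Proof. by rewrite addrA addrAC. Qed.

(* [f] in [D(A_{>=i}(i))_m] goes to [f] composed with the truncation
   [A_{i-m} -> (A_{>=i})_{i-m}], an element of [D(A)_{m-i}]. *)
Definition dual_proj_fun m (f : rcomp DAge m) (y : gzcomp A (- (m - Posz i))) : k^o :=
  f (vsproj (Age (Posz i - m)) (dcast (gzcomp A) (opprB m (Posz i)) y)).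

Lemma dual_proj_fun_linear m (f : rcomp DAge m) : linear (dual_proj_fun f).
Proof. by move=> c y z; rewrite /dual_proj_fun dcast_linear !linearP. Qed.

Definition dual_proj m (f : rcomp DAge m) : 'Hom(gzcomp A (- (m - Posz i)), k^o) :=
  linfun (dual_proj_fun f).

Lemma dual_projE m (f : rcomp DAge m) : dual_proj f =1 dual_proj_fun f.
Proof. exact/linfunE_linear/dual_proj_fun_linear. Qed.

Lemma dual_proj_linear m : linear (@dual_proj m).
Proof.
move=> c f g; apply/lfunP => y.
by rewrite !lfun_simp /= !dual_projE /dual_proj_fun !lfun_simp.
Qed.

Lemma dual_proj_bij m : m < 1 -> bijective (@dual_proj m).
Proof.
move=> m_lt1; have memA v : v \in Age (Posz i - m) by apply: memv_if; lia.
pose ext_fun (h : 'Hom(gzcomp A (- (m - Posz i)), k^o)) (x : subvs_of (Age (Posz i - m))) :=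
  h (dcast (gzcomp A) (esym (opprB m (Posz i))) (vsval x)).
have ext_linear h : linear (ext_fun h).
  by move=> c x y; rewrite /ext_fun linearP dcast_linear linearP.
exists (fun h => linfun (ext_fun h)) => [f|h]; apply/lfunP => x.
- by rewrite linfunE_linear // /ext_fun dual_projE /dual_proj_fun dcast_dcast dcast_id vsvalK.
- by rewrite dual_projE /dual_proj_fun linfunE_linear // /ext_fun vsprojK // dcast_dcast dcast_id.
Qed.

Lemma dual_proj_ract m n (f : rcomp DAge m) (a : acomp A n) : m + Posz n < 1 ->
  dual_proj (ract f a) = dcast (fun p => 'Hom(gzcomp A (- p), k^o)) (addrAC m (- Posz i) n)
                                (@ract _ _ (gdual (glreg A)) _ _ (dual_proj f) a).
Proof.
move=> mn_lt1; apply/lfunP => y.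
rewrite (dcast_hom (W := gzcomp A) (g := -%R)) !dual_projE /dual_proj_fun.
cbn [ract lact gdual glshift glge glsub].
rewrite !linfunE_linear ?dual_projE /dual_proj_fun;
  try by move=> c u v; rewrite !(dcast_linear, lact_linear A_graded, linearP).
congr (f _); apply: subvs_inj.
rewrite (dcast_vsval (V := fun p => gzcomp A (Posz i + p)) (U := fun p => Age (Posz i + p))).
rewrite (dcast_vsval (V := gzcomp A) (U := fun p => Age p)).
rewrite !vsprojK; try by apply: memv_if; lia.
rewrite !(dcast_nat (V := gzcomp A) (W := fun p => gzcomp A (Posz n + p))
                    (fun p y => @lact _ _ (glreg A) n p a y)).
rewrite (dcast_comp (W := gzcomp A) (g := fun p => Posz i + p)).
rewrite !(dcast_comp (W := gzcomp A) (g := fun p => Posz n + p)) !dcast_dcast.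
exact: dcast_irr.
Qed.

Definition frob_trunc m (f : rcomp DAge m) : rcomp Q m :=
  vsproj _ (dcast (gzcomp A) (shift_deg m) (phi (m - Posz i) (dual_proj f))).

Lemma frob_trunc_linear m : linear (@frob_trunc m).
Proof.
by move=> c f g; rewrite /frob_trunc dual_proj_linear phi_linear dcast_linear linearP.
Qed.

Lemma frob_trunc_bij m : bijective (@frob_trunc m).
Proof.
have [m_lt1|m_ge1] := boolP (m < 1).
  apply: bij_comp; first by apply: vsproj_bij => v; rewrite m_lt1 memvf.
  apply: bij_comp; first exact: dcast_bij.
  by apply: bij_comp; [exact: phi_bij | exact: dual_proj_bij].
apply: (bij_subsingleton _ 0) => f g.
  suff dom0 (h : rcomp DAge m) : h = 0 by rewrite (dom0 f) (dom0 g).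
  by apply: lfun_dom0 => x; apply: subvs_if_eq0; lia.
by rewrite (subvs_if_eq0 f m_ge1) (subvs_if_eq0 g m_ge1).
Qed.

Lemma frob_trunc_ract m n (f : rcomp DAge m) (a : acomp A n) :
  frob_trunc (ract f a) = ract (frob_trunc f) a.
Proof.
have [mn_lt1|mn_ge1] := boolP (m + Posz n < 1); last first.
  have Q0 (q : rcomp Q (m + Posz n)) : q = 0 by apply: subvs_if_eq0.
  by rewrite (Q0 (frob_trunc _)) (Q0 (ract _ _)).
rewrite /frob_trunc dual_proj_ract //.
rewrite (dcast_nat (V := fun p => 'Hom(gzcomp A (- p), k^o)) (W := fun p => gzcomp A (l + p)) phi).
rewrite phi_ract; cbn [ract grquot_ge grsub grshift].
rewrite vsprojK; last by apply: memv_if; lia.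
rewrite (dcast_nat (V := gzcomp A) (W := fun p => gzcomp A (p + Posz n))
                   (fun p y => @ract _ _ (grreg A) p n y a)).
rewrite (dcast_comp (W := gzcomp A) (g := fun p => l + p)).
rewrite (dcast_comp (W := gzcomp A) (g := fun p => p + Posz n)) !dcast_dcast.
by congr (vsproj _ _); apply: dcast_irr.
Qed.

End FrobeniusTruncation.

Theorem lemma3p10 (k : closedFieldType) (A : galg k) (l : int) :
  graded_frobenius A l ->
  forall i : nat,
    grIso (gdual (glshift (glge (glreg A) (Posz i)) (Posz i)))
          (grquot_ge (grshift (grreg A) (l - Posz i)) 1).
Proof.
move=> [A_graded [phi [phi_linear phi_bij phi_ract]]] i.
exists (@frob_trunc _ _ _ phi i); split.
- exact: frob_trunc_linear.
- exact: frob_trunc_bij.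
- exact: frob_trunc_ract.
Qed.
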